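(* Consider a series system (so $\phi(s)=1$ if and only if $s_k=1$ for all $k$), with an arbitrary joint prior distribution of the component states and with inspection error rates $\epsilon_{FA},\epsilon_{FS}\in[0,1/2)$ identical for all components. For any two components $c_i,c_j$ with $p_i\ge p_j$, we have $I_i\supseteq I_j$, i.e. $p_{\omega|y_i=1}\le p_{\omega|y_j=1}\le p_{\omega|y_j=0}\le p_{\omega|y_i=0}$, and consequently $\mathrm{VoI}_G(i)\ge\mathrm{VoI}_G(j)$ for every concave function $l^*$. In particular, the most vulnerable component (the one with the highest marginal failure probability) has the highest $\mathrm{VoI}_G$, regardless of $l^*$.
   Context: A system consists of $N$ binary components $c_1,\dots,c_N$ with random joint state $s=(s_1,\dots,s_N)\in\{0,1\}^N$ ($s_k=1$: working; $s_k=0$: failed), with arbitrary prior distribution $p_s$. The system state is $u=\phi(s)$ ($u=0$: system failure), $p_\pi=\mathbb{P}[u=0]$, and $p_k=\mathbb{P}[s_k=0]$ is the marginal failure probability of $c_k$. Inspecting $c_k$ yields a binary observation $y_k$ (alarm $y_k=0$, silence $y_k=1$) which, given $s$, depends only on $s_k$, with $\mathbb{P}[y_k=1\mid s_k=0]=\epsilon_{FS}$ and $\mathbb{P}[y_k=0\mid s_k=1]=\epsilon_{FA}$. Then $h_k=\mathbb{P}[y_k=0]=\epsilon_{FA}+(1-\epsilon_{FA}-\epsilon_{FS})p_k$; posterior system failure probabilities are $p_{\omega|y_k=b}=\mathbb{P}[u=0\mid y_k=b]$ (defined when the conditioning event has positive probability), and $I_k=[p_{\omega|y_k=1},p_{\omega|y_k=0}]$.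 Global metric: for a concave $l^*:[0,1]\to\mathbb{R}$, $L^G_\pi=l^*(p_\pi)$, $L^G_\omega(k)=h_k\,l^*(p_{\omega|y_k=0})+(1-h_k)\,l^*(p_{\omega|y_k=1})$ (a term with zero probability is omitted), and $\mathrm{VoI}_G(k)=L^G_\pi-L^G_\omega(k)$. *)

From mathcomp Require Import all_boot all_order all_algebra.
Set Implicit Arguments. Unset Strict Implicit. Unset Printing Implicit Defensive.
Import Order.TTheory GRing.Theory Num.Theory.
Local Open Scope ring_scope.

(* Joint component state s = (s_1..s_N) : true = working (s_k = 1),
   false = failed (s_k = 0). *)
Definition cstate (N : nat) := {ffun 'I_N -> bool}.

Definition is_pmf (R : realFieldType) (N : nat) (P : {ffun cstate N -> R}) :=
  (forall s, 0 <= P s) /\ \sum_(s : cstate N) P s = 1.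

Definition series_phi (N : nat) (s : cstate N) : bool := [forall k, s k].

Definition pk (R : realFieldType) N (P : {ffun cstate N -> R}) (k : 'I_N) : R :=
  \sum_(s : cstate N | ~~ s k) P s.

Definition p_pi (R : realFieldType) N (phi : cstate N -> bool)
  (P : {ffun cstate N -> R}) : R := \sum_(s | ~~ phi s) P s.

(* likelihood P[y_k = b | s_k = sk]; b = false : alarm (y=0), true : silence (y=1) *)
Definition lik (R : realFieldType) (eFA eFS : R) (sk b : bool) : R :=
  if sk then (if b then 1 - eFA else eFA) else (if b then eFS else 1 - eFS).

Definition py (R : realFieldType) N (eFA eFS : R) (P : {ffun cstate N -> R})
  (k : 'I_N) (b : bool) : R := \sum_(s : cstate N) P s * lik eFA eFS (s k) b.

Definition hk (R : realFieldType) N (eFA eFS : R) (P : {ffun cstate N -> R})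
  (k : 'I_N) : R := py eFA eFS P k false.

Definition post (R : realFieldType) N (phi : cstate N -> bool) (eFA eFS : R)
  (P : {ffun cstate N -> R}) (k : 'I_N) (b : bool) : R :=
  (\sum_(s | ~~ phi s) P s * lik eFA eFS (s k) b) / py eFA eFS P k b.

Definition concave01 (R : realFieldType) (l : R -> R) :=
  forall x y t : R, 0 <= x <= 1 -> 0 <= y <= 1 -> 0 <= t <= 1 ->
    t * l x + (1 - t) * l y <= l (t * x + (1 - t) * y).

(* L^G_omega(k) = h_k l*(p_{w|y_k=0}) + (1-h_k) l*(p_{w|y_k=1}); a term with
   zero probability vanishes since it is multiplied by 0. *)
Definition LG_omega (R : realFieldType) N (phi : cstate N -> bool) (eFA eFS : R)
  (P : {ffun cstate N -> R}) (l : R -> R) (k : 'I_N) : R :=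
  hk eFA eFS P k * l (post phi eFA eFS P k false)
  + (1 - hk eFA eFS P k) * l (post phi eFA eFS P k true).

Definition VoI_G (R : realFieldType) N (phi : cstate N -> bool) (eFA eFS : R)
  (P : {ffun cstate N -> R}) (l : R -> R) (k : 'I_N) : R :=
  l (p_pi phi P) - LG_omega phi eFA eFS P l k.

From mathcomp Require Import all_boot all_order all_algebra.
From mathcomp Require Import ring lra.
Import Order.TTheory GRing.Theory Num.Theory.
Local Open Scope ring_scope.
Set Implicit Arguments. Unset Strict Implicit.

(* Let q be the probability that the series system works.  A working series
   system forces s_k = 1, so P[u = 0, y_k = b] = P[y_k = b] - q P[y_k = b | s_k = 1],
   whence p_{w|y_k=0} = 1 - q eFA / h_k and p_{w|y_k=1} = 1 - q (1 - eFA) / (1 - h_k).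
   Both are monotone in h_k = eFA + (1 - eFA - eFS) p_k, which gives the nesting
   of the intervals I_k.  Since h_k p_{w|y_k=0} + (1 - h_k) p_{w|y_k=1} = p_pi for
   every k, the two posteriors of component i are a mean-preserving spread of
   those of component j, and concavity of l* compares L^G_omega through the chord
   of l* over I_i. *)

Lemma divr_ge0_le1 (R : realFieldType) (a b : R) :
  0 <= a -> a <= b -> 0 <= a / b <= 1.
Proof.
move=> a_ge0 le_ab; have [->|b_neq0] := eqVneq b 0.
  by rewrite invr0 mulr0 lexx ler01.
have b_gt0 : 0 < b by rewrite lt_def b_neq0 (le_trans a_ge0).
by rewrite divr_ge0 ?(le_trans a_ge0) // ler_pdivrMr // mul1r.
Qed.

Lemma mulr_divr_id (R : realFieldType) (a b : R) :
  0 <= a -> a <= b -> b * (a / b) = a.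
Proof.
move=> a_ge0 le_ab; have [b0|b_neq0] := eqVneq b 0; last by rewrite mulrC divfK.
have a0 : a = 0 by apply/eqP; rewrite eq_le a_ge0 andbT -b0.
by rewrite a0 mul0r mulr0.
Qed.

(* (x - c) / x = 1 - c / x when x != 0; at x = 0 the hypothesis forces c = 0 and
   the left-hand side is the junk value 0. *)
Lemma ler_subr_div (R : realFieldType) (c x y : R) :
  0 <= c <= x -> x <= y -> (x - c) / x <= (y - c) / y.
Proof.
case/andP=> c_ge0 le_cx le_xy; have [x0|x_neq0] := eqVneq x 0.
  have c0 : c = 0 by apply/eqP; rewrite eq_le c_ge0 andbT -x0.
  by rewrite x0 c0 invr0 mulr0 subr0 divr_ge0 // -x0.
have x_gt0 : 0 < x by rewrite lt_def x_neq0 (le_trans c_ge0).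
have y_gt0 : 0 < y := lt_le_trans x_gt0 le_xy.
rewrite -subr_ge0.
have -> : (y - c) / y - (x - c) / x = c * (y - x) / (x * y).
  by field; rewrite !gt_eqF.
by rewrite divr_ge0 ?mulr_ge0 ?subr_ge0 // ltW.
Qed.

Section Chord.
Variables (R : realFieldType) (l : R -> R).

Definition chord (a b x : R) : R := l b + (x - b) / (a - b) * (l a - l b).

Lemma chord_affine (a b h x y : R) :
  h * chord a b x + (1 - h) * chord a b y = chord a b (h * x + (1 - h) * y).
Proof. by rewrite /chord; ring. Qed.

Lemma chord_left (a b : R) : chord a b a = l a.
Proof.
rewrite /chord; have [->|ab_neq0] := eqVneq a b; first by rewrite subrr mul0r mul0r addr0.
by rewrite divff ?subr_eq0 // mul1r addrC subrK.
Qed.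

Lemma chord_right (a b : R) : chord a b b = l b.
Proof. by rewrite /chord subrr mul0r mul0r addr0. Qed.

Hypothesis l_concave : concave01 l.

Lemma chord_le (a b x : R) : 0 <= b -> b <= x <= a -> a <= 1 -> chord a b x <= l x.
Proof.
move=> b_ge0 /andP[le_bx le_xa] a_le1.
have [eq_ab|ab_neq0] := eqVneq a b.
  have -> : x = b by apply/eqP; rewrite eq_le le_bx -eq_ab le_xa.
  by rewrite chord_right.
have ab_gt0 : 0 < a - b by rewrite lt_def subr_eq0 ab_neq0 subr_ge0 (le_trans le_bx).
set t := (x - b) / (a - b).
have t01 : 0 <= t <= 1 by apply: divr_ge0_le1; lra.
have x_mix : t * a + (1 - t) * b = x by rewrite /t; field; rewrite gt_eqF.
have a01 : 0 <= a <= 1 by apply/andP; split; lra.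
have b01 : 0 <= b <= 1 by apply/andP; split; lra.
have := @l_concave a b t a01 b01 t01.
by rewrite x_mix /chord -/t; lra.
Qed.

Lemma concave_spread_le (h1 h2 a1 b1 a2 b2 : R) :
  0 <= h2 <= 1 -> 0 <= b1 -> a1 <= 1 ->
  b1 <= a2 <= a1 -> b1 <= b2 <= a1 ->
  h1 * a1 + (1 - h1) * b1 = h2 * a2 + (1 - h2) * b2 ->
  h1 * l a1 + (1 - h1) * l b1 <= h2 * l a2 + (1 - h2) * l b2.
Proof.
move=> /andP[h2_ge0 h2_le1] b1_ge0 a1_le1 a2_in b2_in mean_eq.
rewrite -{1}(chord_left a1 b1) -(chord_right a1 b1) chord_affine mean_eq -chord_affine.
by apply: lerD; apply: ler_wpM2l; rewrite ?subr_ge0 ?chord_le.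
Qed.

End Chord.

Lemma lik_true_add_false (R : realFieldType) (e f : R) sk :
  lik e f sk true + lik e f sk false = 1.
Proof. by case: sk => /=; ring. Qed.

Definition p_work (R : realFieldType) N (P : {ffun cstate N -> R}) : R :=
  \sum_(s | series_phi s) P s.

Section SeriesPosterior.
Variables (R : realFieldType) (N : nat) (P : {ffun cstate N -> R}) (e f : R).
Hypothesis P_pmf : is_pmf P.
Hypotheses (e_ge0 : 0 <= e) (f_ge0 : 0 <= f) (ef_le1 : e + f <= 1).

Local Notation h k := (hk e f P k).
Local Notation q := (p_work P).
Local Notation ps k b := (post (@series_phi N) e f P k b).

Lemma P_ge0 s : 0 <= P s. Proof. by case: P_pmf. Qed.

Lemma e_le1 : e <= 1. Proof. by rewrite (le_trans _ ef_le1) ?lerDl. Qed.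

Lemma f_le1 : f <= 1. Proof. by rewrite (le_trans _ ef_le1) ?lerDr. Qed.

Lemma subr_ef_ge0 : 0 <= 1 - e - f. Proof. by rewrite -addrA -opprD subr_ge0. Qed.

Lemma lik_ge0 sk b : 0 <= lik e f sk b.
Proof. by case: sk; case: b; rewrite /= ?subr_ge0 ?e_le1 ?f_le1. Qed.

Lemma p_work_ge0 : 0 <= q.
Proof. by apply: sumr_ge0 => s _; apply: P_ge0. Qed.

Lemma pk_ge0 k : 0 <= pk P k.
Proof. by apply: sumr_ge0 => s _; apply: P_ge0. Qed.

Lemma py_true k : py e f P k true = 1 - h k.
Proof.
case: P_pmf => _ sum1; apply/eqP; rewrite eq_sym subr_eq /hk /py -big_split /= -sum1.
by apply/eqP/eq_bigr => s _; rewrite -mulrDr lik_true_add_false mulr1.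
Qed.

Lemma hkE k : h k = e + (1 - e - f) * pk P k.
Proof.
have work_k : \sum_(s : cstate N | s k) P s = 1 - pk P k.
  by case: P_pmf => _ <-; rewrite [in RHS](bigID (fun s : cstate N => s k)) /= addrK.
rewrite /hk /py (bigID (fun s : cstate N => s k)) /=.
rewrite (eq_bigr (fun s => P s * e)); last by move=> s ->.
rewrite [X in _ + X](eq_bigr (fun s => P s * (1 - f))); last by move=> s /negbTE ->.
by rewrite -!mulr_suml work_k -/(pk P k); ring.
Qed.

Lemma hk_ge_e k : e <= h k.
Proof. by rewrite hkE lerDl mulr_ge0 ?pk_ge0 ?subr_ef_ge0. Qed.

Lemma le_hk i j : pk P j <= pk P i -> h j <= h i.
Proof. by move=> le_pk; rewrite !hkE lerD2l ler_wpM2l ?subr_ef_ge0. Qed.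

Lemma sum_fail_lik k b :
  \sum_(s | ~~ series_phi s) P s * lik e f (s k) b = py e f P k b - q * lik e f true b.
Proof.
have work_sum : \sum_(s | series_phi s) P s * lik e f (s k) b = q * lik e f true b.
  by rewrite /p_work mulr_suml; apply: eq_bigr => s /forallP/(_ k) ->.
by rewrite /py [in RHS](bigID (@series_phi N)) /= work_sum /=; ring.
Qed.

Lemma sum_fail_lik_ge0 k b : 0 <= py e f P k b - q * lik e f true b.
Proof. by rewrite -sum_fail_lik sumr_ge0 // => s _; rewrite mulr_ge0 ?P_ge0 ?lik_ge0. Qed.

Lemma p_work_e_le_hk k : q * e <= h k.
Proof. by rewrite -subr_ge0; apply: (sum_fail_lik_ge0 k false). Qed.

Lemma p_work_le_1_hk k : q * (1 - e) <= 1 - h k.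
Proof. by rewrite -subr_ge0 -py_true; apply: (sum_fail_lik_ge0 k true). Qed.

Lemma post_false k : ps k false = (h k - q * e) / h k.
Proof. by rewrite /post sum_fail_lik. Qed.

Lemma post_true k : ps k true = (1 - h k - q * (1 - e)) / (1 - h k).
Proof. by rewrite /post sum_fail_lik py_true. Qed.

Lemma p_work_e_ge0 : 0 <= q * e.
Proof. by rewrite mulr_ge0 ?p_work_ge0. Qed.

Lemma p_work_1e_ge0 : 0 <= q * (1 - e).
Proof. by rewrite mulr_ge0 ?p_work_ge0 ?subr_ge0 ?e_le1. Qed.

Lemma hk_ge0 k : 0 <= h k.
Proof. exact: le_trans p_work_e_ge0 (p_work_e_le_hk k). Qed.

Lemma hk_le1 k : h k <= 1.
Proof. by rewrite -subr_ge0; apply: le_trans p_work_1e_ge0 (p_work_le_1_hk k). Qed.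

Lemma post_ge0_le1 k b : 0 <= ps k b <= 1.
Proof.
by case: b; rewrite (post_true, post_false); apply: divr_ge0_le1;
  rewrite ?gerBl ?subr_ge0 ?p_work_e_ge0 ?p_work_1e_ge0 ?p_work_e_le_hk ?p_work_le_1_hk.
Qed.

Lemma p_pi_series : p_pi (@series_phi N) P = 1 - q.
Proof.
by case: P_pmf => _ <-; rewrite /p_pi [in RHS](bigID (@series_phi N)) /= /p_work; ring.
Qed.

Lemma post_mean k : h k * ps k false + (1 - h k) * ps k true = p_pi (@series_phi N) P.
Proof.
rewrite post_false post_true !mulr_divr_id ?p_pi_series;
  rewrite ?gerBl ?subr_ge0 ?p_work_e_ge0 ?p_work_1e_ge0 ?p_work_e_le_hk ?p_work_le_1_hk //.
by ring.
Qed.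

Lemma le_post_false i j : pk P j <= pk P i -> ps j false <= ps i false.
Proof.
by move=> le_pk; rewrite !post_false ler_subr_div ?le_hk // p_work_e_ge0 p_work_e_le_hk.
Qed.

Lemma le_post_true i j : pk P j <= pk P i -> ps i true <= ps j true.
Proof.
by move=> le_pk; rewrite !post_true ler_subr_div ?lerB ?le_hk // p_work_1e_ge0 p_work_le_1_hk.
Qed.

Lemma post_true_le_false k : 0 < h k < 1 -> ps k true <= ps k false.
Proof.
case/andP=> h_gt0 h_lt1; rewrite post_false post_true -subr_ge0.
have -> : (h k - q * e) / h k - (1 - h k - q * (1 - e)) / (1 - h k)
        = q * (h k - e) / (h k * (1 - h k)).
  by field; rewrite !gt_eqF ?subr_gt0.
by rewrite divr_ge0 ?mulr_ge0 ?p_work_ge0 ?subr_ge0 ?hk_ge_e ?hk_le1 ?hk_ge0.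
Qed.

Variable l : R -> R.
Hypothesis l_concave : concave01 l.

Local Notation VoI k := (VoI_G (@series_phi N) e f P l k).

Lemma VoI_G_ge0 k : 0 <= VoI k.
Proof.
rewrite subr_ge0 /LG_omega -(post_mean k) l_concave ?post_ge0_le1 //.
by rewrite hk_ge0 hk_le1.
Qed.

(* When y_k is almost surely constant, the posterior that occurs is the prior. *)
Lemma VoI_G_degenerate k : h k = 0 \/ h k = 1 -> VoI k = 0.
Proof.
rewrite /VoI_G /LG_omega; case=> h_eq; have := post_mean k; rewrite h_eq.
  by rewrite !(mul0r, subr0, mul1r, add0r) => ->; rewrite subrr.
by rewrite !(subrr, mul0r, mul1r, addr0) => ->; rewrite subrr.
Qed.

Lemma le_VoI_G i j : pk P j <= pk P i -> VoI j <= VoI i.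
Proof.
move=> le_pk; have [hj01|hj_deg] := boolP (0 < h j < 1).
  rewrite lerD2l lerN2 /LG_omega; apply: concave_spread_le; rewrite ?post_mean //.
  - by rewrite hk_ge0 hk_le1.
  - by case/andP: (post_ge0_le1 i true).
  - by case/andP: (post_ge0_le1 i false).
  - by rewrite le_post_false // (le_trans (le_post_true le_pk)) ?post_true_le_false.
  - by rewrite le_post_true // (le_trans (post_true_le_false _)) ?le_post_false.
rewrite VoI_G_degenerate ?VoI_G_ge0 //.
move: hj_deg; rewrite negb_and -!leNgt => /orP[hj_le0|hj_ge1].
  by left; apply/eqP; rewrite eq_le hj_le0 hk_ge0.
by right; apply/eqP; rewrite eq_le hj_ge1 hk_le1.
Qed.

End SeriesPosterior.

Theorem mainTheorem3 (R : realFieldType) (N : nat) (P : {ffun cstate N -> R})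
  (eFA eFS : R) :
  is_pmf P ->
  0 <= eFA < 1 / 2 -> 0 <= eFS < 1 / 2 ->
  (forall i j : 'I_N, pk P j <= pk P i ->
     ((0 < hk eFA eFS P i < 1) -> (0 < hk eFA eFS P j < 1) ->
        post (@series_phi N) eFA eFS P i true <= post (@series_phi N) eFA eFS P j true
        /\ post (@series_phi N) eFA eFS P j true <= post (@series_phi N) eFA eFS P j false
        /\ post (@series_phi N) eFA eFS P j false <= post (@series_phi N) eFA eFS P i false)
     /\ (forall l : R -> R, concave01 l ->
           VoI_G (@series_phi N) eFA eFS P l j <= VoI_G (@series_phi N) eFA eFS P l i))
  /\ (forall i : 'I_N, (forall k : 'I_N, pk P k <= pk P i) ->
        forall l : R -> R, concave01 l ->
        forall k : 'I_N, VoI_G (@series_phi N) eFA eFS P l k <= VoI_G (@series_phi N) eFA eFS P l i).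
Proof.
move=> P_pmf /andP[eFA_ge0 eFA_lt] /andP[eFS_ge0 eFS_lt].
have ef_le1 : eFA + eFS <= 1 by lra.
split=> [i j le_pk | i pk_max l l_concave k]; last exact: le_VoI_G.
split=> [_ hj01 | l l_concave]; last exact: le_VoI_G.
split; first exact: le_post_true.
by split; [exact: post_true_le_false | exact: le_post_false].
Qed.
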